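(* Let $n,a,t\in\mathbb N$ satisfy $t<a<n$. If $\mathcal F\subseteq\binom{[n]}{a}$ and $\mathcal G\subseteq\binom{[n]}{a}$ are such that $|F\cap G|\le t$ for all $F\in\mathcal F$ and $G\in\mathcal G$, then $$|\mathcal F|\cdot|\mathcal G|\le 32\,a(n-a)\cdot e^{-(a-t-1)^2/(20a)}\binom{n}{a}^2.$$
   Context: $[n]=\{1,\dots,n\}$ and $\binom{[n]}{a}$ denotes the family of all $a$-element subsets of $[n]$. *)

From mathcomp Require Import all_boot.
From Stdlib Require Import Reals.

(* Talagrand's inequality on the p-biased cube {0,1}^n says that for every
   nonempty A, E[z^d(x,A)] * mu(A) <= (1 + pq(z + 1/z - 2))^n, where d is the
   Hamming distance; it is proved by induction on n, splitting A along the
   first coordinate.  Identify sets with their characteristic vectors and take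
   p = a/n, so that every a-set has the same weight W = p^a q^(n-a).  Every
   member of G is at distance at least 2(a - t) from F, hence
   |F| |G| W^2 z^(2(a-t)) <= (1 + pq(z + 1/z - 2))^n, and z = exp((a-t)/(2a))
   turns this into |F| |G| W^2 <= exp(-(a-t-1)^2/(10a)).  Finally C(n,a) W,
   the mode of the binomial distribution, is at least 1/(n+1), and the
   trivial bound |F| |G| <= C(n,a)^2 covers the range where the exponential
   factor is large. *)

From HB Require Import structures.
From mathcomp Require Import all_boot zify.
From Stdlib Require Import Reals Lra Lia Psatz.
(* [Reals] rebinds [^] on [nat] to [Nat.pow]; restore [expn]. *)
Import ssrnat.

HB.instance Definition _ := Monoid.isComLaw.Build R 0%R Rplus
  (fun x y z => esym (Rplus_assoc x y z)) Rplus_comm Rplus_0_l.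

Notation "\sum_ ( i <- r | P ) F" := (\big[Rplus/0%R]_(i <- r | P) F%R) : R_scope.
Notation "\sum_ ( i <- r ) F" := (\big[Rplus/0%R]_(i <- r) F%R) : R_scope.

Open Scope R_scope.

Section RealSums.
Context {T : eqType} {s : seq T}.

Lemma sumR_ge0 (P : pred T) (f : T -> R) :
  (forall x, x \in s -> P x -> 0 <= f x) -> 0 <= \sum_(x <- s | P x) f x.
Proof.
move=> f_ge0; rewrite big_seq_cond; apply: (big_ind (fun u => 0 <= u)); [lra | move=> *; lra |].
by move=> x /andP [xs Px]; apply: f_ge0.
Qed.

Lemma ler_sumR (f g : T -> R) :
  (forall x, x \in s -> f x <= g x) -> \sum_(x <- s) f x <= \sum_(x <- s) g x.
Proof.
move=> fg; rewrite !big_seq; apply: (big_ind2 (fun u v => u <= v)) => //; [lra | move=> *; lra].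
Qed.

Lemma sumR_distrr (c : R) (f : T -> R) : \sum_(x <- s) c * f x = c * \sum_(x <- s) f x.
Proof. by apply: (big_rec2 (fun u v => u = c * v)) => [|x u v _ ->]; ring. Qed.

Lemma sumR_mkcond (P : pred T) (f : T -> R) :
  \sum_(x <- s | P x) f x = \sum_(x <- s) (if P x then f x else 0).
Proof. exact: big_mkcond. Qed.

Lemma sumR_const (c : R) : \sum_(x <- s) c = INR (size s) * c.
Proof.
elim: s => [|x s' IH]; first by rewrite big_nil /=; ring.
by rewrite big_cons IH (S_INR (size s')); ring.
Qed.

End RealSums.

(** * The hypercube and Hamming distance *)

Close Scope R_scope.

Fixpoint cube n : seq (seq bool) :=
  if n is m.+1 then map (cons true) (cube m) ++ map (cons false) (cube m) else [:: [::]].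

Lemma cons_inj (b : bool) : injective (cons b). Proof. by move=> x y []. Qed.

Lemma mem_cube n x : (x \in cube n) = (size x == n).
Proof.
elim: n x => [|n IH] [|b x] //=; rewrite mem_cat.
  by apply/norP; split; apply/mapP => [[]].
rewrite eqSS -IH; case: b; rewrite (mem_map (@cons_inj _)).
  by rewrite orbC; case: mapP => // [[]].
by case: mapP => // [[]].
Qed.

Lemma mem_cube_cons n b x : (b :: x \in cube n.+1) = (x \in cube n).
Proof. by rewrite !mem_cube. Qed.

Lemma cube_uniq n : uniq (cube n).
Proof.
elim: n => [|n IH] //=; rewrite cat_uniq !(map_inj_uniq (@cons_inj _)) IH andbT.
by apply/hasPn => _ /mapP [y _ ->]; apply/mapP => [[]].
Qed.

Definition ham (x y : seq bool) : nat := count (fun bc => bc.1 != bc.2) (zip x y).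

Lemma ham_le_size x y : ham x y <= size y.
Proof. by rewrite /ham (leq_trans (count_size _ _)) // size_zip geq_minr. Qed.

Lemma ham_map (T : Type) (P Q : pred T) (s : seq T) :
  ham (map P s) (map Q s) = count (fun i => P i != Q i) s.
Proof. by rewrite /ham zip_map count_map. Qed.

Section BigMin.
Variables (T : eqType) (d : nat) (P : pred T) (f : T -> nat).

Lemma bigmin_le s {y} : y \in s -> P y -> \big[minn/d]_(x <- s | P x) f x <= f y.
Proof.
elim: s => [|x s IH] //; rewrite in_cons big_cons => /predU1P [<- -> | ys Py].
  exact: geq_minl.
by case: ifP => _; rewrite ?geq_min IH ?orbT.
Qed.

Lemma bigmin_attained s :
  \big[minn/d]_(x <- s | P x) f x = d \/
  exists2 y, y \in s & P y /\ \big[minn/d]_(x <- s | P x) f x = f y.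
Proof.
rewrite big_seq_cond; elim/big_ind: _ => [|u v Ku Kv|y /andP [ys Py]]; first by left.
  by case: leqP.
by right; exists y.
Qed.

End BigMin.

(* [n.+1] exceeds every Hamming distance within [cube n]; it is only reached when [A]
   misses the cube. *)
Definition dist n (A : pred (seq bool)) x := \big[minn/n.+1]_(y <- cube n | A y) ham x y.

Lemma dist_le {n} {A : pred (seq bool)} x {y} : y \in cube n -> A y -> dist n A x <= ham x y.
Proof. exact: bigmin_le. Qed.

Lemma dist_attained {n} {A : pred (seq bool)} x :
  has A (cube n) -> exists2 y, y \in cube n & A y /\ dist n A x = ham x y.
Proof.
case/hasP=> y0 y0n Ay0; case: (@bigmin_attained _ n.+1 A (ham x) (cube n)) => // dist_top.
have := leq_trans (dist_le x y0n Ay0) (ham_le_size x y0).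
by rewrite /dist dist_top mem_cube in y0n *; rewrite (eqP y0n) ltnn.
Qed.

(** * Talagrand's inequality on the biased cube *)

Open Scope R_scope.

Lemma add_inv_le (r z : R) : 1 <= r <= z -> r + / r <= z + / z.
Proof.
move=> [r_ge1 r_le_z].
have gap : z + / z - (r + / r) = (z - r) * (r * z - 1) * / (r * z) by field; lra.
have : 0 <= (z - r) * (r * z - 1) by apply: Rmult_le_pos; nra.
have : 0 < / (r * z) by apply: Rinv_0_lt_compat; nra.
nra.
Qed.

Lemma cross_products_le (z K M m0 m1 E0 E1 : R) :
  1 <= z -> 0 <= K -> 0 <= m1 <= m0 -> m0 <= M -> 0 <= E0 -> 0 <= E1 ->
  E1 * M <= z * K -> E0 * m0 <= K -> E1 * m1 <= K ->
  E1 * m0 + E0 * m1 <= K * (z + / z).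
Proof.
move=> z_ge1 K_ge0 [m1_ge0 m10] m0M E0_ge0 E1_ge0 E1M E0m0 E1m1.
case: (Rle_lt_dec (z * m1) m0) => [zm1_le | m0_lt].
- have E0m1 : E0 * m1 <= K * / z.
    have : z * / z = 1 by field; lra.
    have : 0 < / z by apply: Rinv_0_lt_compat; lra.
    nra.
  nra.
- (* [m0 / m1] lies in [1, z]; trade it against [z] via [r + 1/r <= z + 1/z]. *)
  have m1_gt0 : 0 < m1 by nra.
  set r := m0 / m1.
  have m0E : m0 = r * m1 by rewrite /r; field; lra.
  have r_ge1 : 1 <= r by apply: (Rmult_le_reg_r m1); nra.
  have r_le_z : r <= z by apply: (Rmult_le_reg_r m1); nra.
  have E1m0 : E1 * m0 <= K * r by rewrite m0E; nra.
  have E0m1 : E0 * m1 <= K * / r.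
    have : r * / r = 1 by field; lra.
    have : 0 < / r by apply: Rinv_0_lt_compat; lra.
    nra.
  have := @add_inv_le r z (conj r_ge1 r_le_z); nra.
Qed.

(* The inductive step of Talagrand's inequality: [E_b] and [m_b] are the expectation
   and the measure of the slice [b], [M] the measure of the shadow, [K] the bound in
   dimension [n]. *)
Lemma mixture_products_le (p q z K M m0 m1 E0 E1 : R) :
  0 <= p -> 0 <= q -> p + q = 1 -> 1 <= z -> 0 <= K ->
  0 <= m0 <= M -> 0 <= m1 <= M -> 0 <= E0 -> 0 <= E1 ->
  E0 * M <= z * K -> E1 * M <= z * K -> E0 * m0 <= K -> E1 * m1 <= K ->
  (p * E1 + q * E0) * (p * m1 + q * m0) <= K * (1 + p * q * (z + / z - 2)).
Proof.
move=> p_ge0 q_ge0 pq1 z_ge1 K_ge0 [m0_ge0 m0M] [m1_ge0 m1M] E0_ge0 E1_ge0 E0M E1M E0m0 E1m1.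
have cross : E1 * m0 + E0 * m1 <= K * (z + / z).
  case: (Rle_lt_dec m1 m0) => m10.
  - apply: (cross_products_le _ _ M); lra.
  - rewrite Rplus_comm; apply: (cross_products_le _ _ M); lra.
have -> : K * (1 + p * q * (z + / z - 2)) = (p * p + q * q) * K + p * q * (K * (z + / z)).
  have -> : q = 1 - p by lra.
  ring.
have -> : (p * E1 + q * E0) * (p * m1 + q * m0)
  = p * p * (E1 * m1) + q * q * (E0 * m0) + p * q * (E1 * m0 + E0 * m1) by ring.
have := Rmult_le_compat_l (p * q) _ _ (Rmult_le_pos _ _ p_ge0 q_ge0) cross.
nra.
Qed.

Lemma sum_cubeS n (f : seq bool -> R) :
  \sum_(x <- cube n.+1) f x = \sum_(x <- cube n) f (true :: x) + \sum_(x <- cube n) f (false :: x).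
Proof. by rewrite /= big_cat !big_map. Qed.

Definition slice (b : bool) (A : pred (seq bool)) : pred (seq bool) := fun y => A (b :: y).
Definition shadow (A : pred (seq bool)) : pred (seq bool) :=
  fun y => A (true :: y) || A (false :: y).

Lemma dist_cons_slice n A b x :
  has (slice b A) (cube n) -> (dist n.+1 A (b :: x) <= dist n (slice b A) x)%N.
Proof.
case/(dist_attained x) => y yn [Ay ->].
have byn : b :: y \in cube n.+1 by rewrite mem_cube_cons.
by rewrite (leq_trans (dist_le (b :: x) byn Ay)) // /ham /= eqxx.
Qed.

Lemma dist_cons_shadow n A b x :
  has (shadow A) (cube n) -> (dist n.+1 A (b :: x) <= (dist n (shadow A) x).+1)%N.
Proof.
case/(dist_attained x) => y yn [/orP Ay ->].
have ham_cons c : (ham (b :: x) (c :: y) <= (ham x y).+1)%N by rewrite /ham /=; case: (b != c).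
by case: Ay => Ay; rewrite (leq_trans (dist_le (b :: x) _ Ay)) ?mem_cube_cons.
Qed.

Section Talagrand.
Variables p q z : R.
Hypotheses (p_gt0 : 0 < p) (q_gt0 : 0 < q) (pq1 : p + q = 1) (z_ge1 : 1 <= z).

Fixpoint weight (x : seq bool) : R :=
  if x is b :: x' then (if b then p else q) * weight x' else 1.

Definition mu n (A : pred (seq bool)) := \sum_(x <- cube n | A x) weight x.

Definition Ez n (f : seq bool -> nat) := \sum_(x <- cube n) weight x * z ^ f x.

Definition talagrand_const := 1 + p * q * (z + / z - 2).

Lemma weight_gt0 x : 0 < weight x.
Proof. by elim: x => [|[] x IH] /=; nra. Qed.

Lemma talagrand_const_ge1 : 1 <= talagrand_const.
Proof.
have := @add_inv_le 1 z (conj (Rle_refl 1) z_ge1); rewrite Rinv_1 /talagrand_const => ?.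
have : 0 <= p * q * (z + / z - 2) by apply: Rmult_le_pos; nra.
lra.
Qed.

Lemma mu_ge0 n A : 0 <= mu n A.
Proof. by apply: sumR_ge0 => x _ _; apply/Rlt_le/weight_gt0. Qed.

Lemma mu_sub n (A B : pred (seq bool)) : (forall x, A x -> B x) -> mu n A <= mu n B.
Proof.
move=> AB; rewrite /mu sumR_mkcond [X in _ <= X]sumR_mkcond; apply: ler_sumR => x _.
have := weight_gt0 x; case Ax: (A x); first rewrite (AB x Ax); case: (B x); lra.
Qed.

Lemma mu_cons n A : mu n.+1 A = p * mu n (slice true A) + q * mu n (slice false A).
Proof.
rewrite /mu [LHS]sumR_mkcond sum_cubeS.
by congr (_ + _); rewrite [in RHS]sumR_mkcond -sumR_distrr;
  apply: eq_bigr => x _; rewrite /slice /=; case: (A _); ring.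
Qed.

Lemma Ez_ge0 n f : 0 <= Ez n f.
Proof.
apply: sumR_ge0 => x _ _; apply: Rmult_le_pos; first exact/Rlt_le/weight_gt0.
by apply: pow_le; lra.
Qed.

Lemma Ez_le n (f g : seq bool -> nat) :
  (forall x, x \in cube n -> (f x <= g x)%N) -> Ez n f <= Ez n g.
Proof.
move=> fg; apply: ler_sumR => x xn; apply: Rmult_le_compat_l; first exact/Rlt_le/weight_gt0.
by apply: Rle_pow => //; apply/leP/fg.
Qed.

Lemma Ez_succ n f : Ez n (fun x => (f x).+1) = z * Ez n f.
Proof. by rewrite /Ez -sumR_distrr; apply: eq_bigr => x _ /=; ring. Qed.

Lemma Ez_cons n f :
  Ez n.+1 f = p * Ez n (fun x => f (true :: x)) + q * Ez n (fun x => f (false :: x)).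
Proof. by rewrite /Ez sum_cubeS -!sumR_distrr; congr (_ + _); apply: eq_bigr => x _ /=; ring. Qed.

Theorem talagrand n A : has A (cube n) -> Ez n (dist n A) * mu n A <= talagrand_const ^ n.
Proof.
elim: n A => [|n IH] A hasA.
  have A0 : A [::] by move: hasA; rewrite /= orbF.
  by rewrite /Ez /mu /= !big_cons !big_nil A0 /dist /= big_cons big_nil A0 /=; lra.
set c := talagrand_const in IH *.
have c_ge0 : 0 <= c ^ n by apply: pow_le; have : 1 <= c := talagrand_const_ge1; lra.
pose E b := Ez n (fun x => dist n.+1 A (b :: x)).
have has_shadow : has (shadow A) (cube n).
  case/hasP: hasA => -[|b x]; first by rewrite mem_cube.
  rewrite mem_cube_cons => xn Abx.
  by apply/hasP; exists x; rewrite // /shadow; case: b Abx => ->; rewrite ?orbT.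
have E_shadow b : E b * mu n (shadow A) <= z * c ^ n.
  have Eb : E b <= z * Ez n (dist n (shadow A)).
    by rewrite -Ez_succ; apply: Ez_le => x _; apply: dist_cons_shadow.
  have := IH _ has_shadow; have := mu_ge0 n (shadow A); nra.
have E_slice b : E b * mu n (slice b A) <= c ^ n.
  have [has_b | no_b] := boolP (has (slice b A) (cube n)).
    apply: Rle_trans (IH _ has_b); apply: Rmult_le_compat_r; first exact: mu_ge0.
    by apply: Ez_le => x _; apply: dist_cons_slice.
  rewrite /mu big1_seq ?Rmult_0_r // => x /andP [Ax xn].
  by case/hasP: no_b; exists x.
have slice_shadow b : mu n (slice b A) <= mu n (shadow A).
  by apply: mu_sub => x; rewrite /slice /shadow; case: b => ->; rewrite ?orbT.
rewrite Ez_cons mu_cons /= (Rmult_comm c).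
apply: (mixture_products_le _ _ _ _ (mu n (shadow A))); try lra; try exact: Ez_ge0.
- by split; [apply: mu_ge0 | apply: slice_shadow].
- by split; [apply: mu_ge0 | apply: slice_shadow].
- exact: E_shadow.
- exact: E_shadow.
- exact: E_slice.
- exact: E_slice.
Qed.

Lemma mu_pow_le_Ez n (A B : pred (seq bool)) d :
  (forall x, x \in cube n -> B x -> (d <= dist n A x)%N) -> mu n B * z ^ d <= Ez n (dist n A).
Proof.
move=> far; rewrite /mu sumR_mkcond Rmult_comm -sumR_distrr; apply: ler_sumR => x xn.
have w_gt0 := weight_gt0 x; have zd_gt0 : 0 < z ^ dist n A x by apply: pow_lt; lra.
case Bx: (B x); last nra.
have : z ^ d <= z ^ dist n A x by apply: Rle_pow => //; apply/leP/far.
nra.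
Qed.

End Talagrand.

(** * Uniform families as subsets of the cube *)

Close Scope R_scope.

Lemma count_enum_card (T : finType) (P : pred T) : count P (enum T) = #|P|.
Proof. by rewrite enumT cardE /enum_mem size_filter. Qed.

Definition charvec {n} (A : {set 'I_n}) : seq bool := [seq i \in A | i <- enum 'I_n].

Lemma charvec_cube n (A : {set 'I_n}) : charvec A \in cube n.
Proof. by rewrite mem_cube size_map size_enum_ord. Qed.

Lemma charvec_inj n : injective (@charvec n).
Proof.
move=> A B /(congr1 (nth false ^~ _)) charvecAB; apply/setP => i.
have := charvecAB i; have i_lt : i < size (enum 'I_n) by rewrite size_enum_ord.
by rewrite /charvec !(nth_map i _ _ i_lt) nth_ord_enum.
Qed.

Lemma ham_charvec n (A B : {set 'I_n}) : ham (charvec A) (charvec B) = #|A :\: B| + #|B :\: A|.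
Proof.
rewrite /charvec ham_map count_enum_card -[RHS]subn0 -(cards0 'I_n).
have <- : (A :\: B) :&: (B :\: A) = set0.
  by apply/setP => i; rewrite !inE; case: (i \in A); case: (i \in B).
rewrite -cardsU; apply: eq_card => i.
by rewrite unfold_in !inE; case: (i \in A); case: (i \in B).
Qed.

Lemma ham_charvec_ge n (A B : {set 'I_n}) a t :
  #|A| = a -> #|B| = a -> #|A :&: B| <= t -> 2 * (a - t) <= ham (charvec A) (charvec B).
Proof. by rewrite ham_charvec !cardsD setIC => -> -> AB; lia. Qed.

Open Scope R_scope.

Lemma weight_map p q (T : Type) (P : pred T) (s : seq T) :
  weight p q (map P s) = p ^ count P s * q ^ (size s - count P s).
Proof.
elim: s => [|x s IH] /=; first ring.
rewrite IH; case: (P x); rewrite /= ?add0n ?subSS; first ring.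
by rewrite subSn ?count_size //=; ring.
Qed.

Lemma weight_charvec p q n (A : {set 'I_n}) : weight p q (charvec A) = p ^ #|A| * q ^ (n - #|A|).
Proof. by rewrite /charvec weight_map count_enum_card size_enum_ord. Qed.

Lemma mu_charvec p q {n a} {F : {set {set 'I_n}}} : (forall A, A \in F -> #|A| = a) ->
  mu p q n (mem [seq charvec A | A in F]) = INR #|F| * (p ^ a * q ^ (n - a)).
Proof.
move=> F_a.
have charvecF :
    perm_eq [seq x <- cube n | x \in [seq charvec A | A in F]] [seq charvec A | A in F].
  apply: uniq_perm; first exact: filter_uniq (cube_uniq n).
    by rewrite map_inj_uniq ?enum_uniq //; apply: charvec_inj.
  move=> x; rewrite mem_filter andb_idr // => /mapP [A _ ->]; exact: charvec_cube.
rewrite /mu -big_filter (perm_big _ charvecF) big_map.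
rewrite (eq_big_seq (fun _ => p ^ a * q ^ (n - a))) ?sumR_const -?cardE //.
by move=> A; rewrite mem_enum weight_charvec => /F_a ->.
Qed.

Lemma cross_intersecting_weight_le {p q z n a t} {F G : {set {set 'I_n}}} :
  0 < p -> 0 < q -> p + q = 1 -> 1 <= z ->
  (forall A, A \in F -> #|A| = a) -> (forall B, B \in G -> #|B| = a) ->
  (forall A B, A \in F -> B \in G -> #|A :&: B| <= t)%N ->
  INR #|F| * INR #|G| * (p ^ a * q ^ (n - a)) ^ 2 * z ^ (2 * (a - t))
    <= talagrand_const p q z ^ n.
Proof.
move=> p_gt0 q_gt0 pq1 z_ge1 F_a G_a FG_t.
have c_ge0 : 0 <= talagrand_const p q z ^ n.
  by apply: pow_le; have := talagrand_const_ge1 _ _ _ p_gt0 q_gt0 z_ge1; lra.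
have [-> | [A0 A0F]] := set_0Vmem F; first by rewrite cards0 /=; lra.
pose PF := mem [seq charvec A | A in F]; pose PG := mem [seq charvec B | B in G].
have hasF : has PF (cube n).
  by apply/hasP; exists (charvec A0); [exact: charvec_cube | apply: map_f; rewrite mem_enum].
have far : mu p q n PG * z ^ (2 * (a - t)) <= Ez p q z n (dist n PF).
  apply: (mu_pow_le_Ez _ _ _ p_gt0 q_gt0 z_ge1) => _ _ /mapP [B BG ->].
  have [_ _ [/mapP [A AF ->] ->]] := dist_attained (charvec B) hasF.
  rewrite mem_enum in AF; rewrite mem_enum in BG.
  by apply: ham_charvec_ge; [exact: G_a | exact: F_a | rewrite setIC; exact: FG_t].
have := talagrand _ _ _ p_gt0 q_gt0 pq1 z_ge1 _ _ hasF.
rewrite (mu_charvec p q F_a) (mu_charvec p q G_a) in far *.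
have : 0 <= INR #|F| * (p ^ a * q ^ (n - a)).
  by apply: Rmult_le_pos; [exact: pos_INR | apply: Rmult_le_pos; apply: pow_le; lra].
nra.
Qed.

(** * The mode of the binomial distribution *)

Close Scope R_scope.

Section BinomialMode.
Variables n a : nat.
Hypothesis a_lt_n : a < n.

Let term k := 'C(n, k) * (a ^ k * (n - a) ^ (n - k)).

Let term_succ k : k < n -> term k.+1 * (k.+1 * (n - a)) = term k * ((n - k) * a).
Proof.
move=> k_lt_n; have := mul_bin_left n k; rewrite /term -(subnSK k_lt_n) !expnS.
move: ('C(n, k.+1)) ('C(n, k)) (a ^ k) ((n - a) ^ (n - k.+1)) => C1 C0 X Y bin.
transitivity (k.+1 * C1 * (a * X * Y * (n - a))); first lia.
by rewrite bin; lia.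
Qed.

Let term_inc k : k < a -> term k <= term k.+1.
Proof.
move=> k_lt_a; have pos : 0 < k.+1 * (n - a) by rewrite muln_gt0 subn_gt0 a_lt_n.
rewrite -(leq_pmul2r pos) term_succ; last lia.
by apply: leq_mul => //; nia.
Qed.

Let term_dec k : a <= k -> k < n -> term k.+1 <= term k.
Proof.
move=> a_le_k k_lt_n; have pos : 0 < k.+1 * (n - a) by rewrite muln_gt0 subn_gt0 a_lt_n.
by rewrite -(leq_pmul2r pos) term_succ //; apply: leq_mul => //; nia.
Qed.

Let term_le_mode k : k <= n -> term k <= term a.
Proof.
have term_nondec : {in [pred i | i <= a] &, {homo term : i j / i <= j}}.
  apply: homo_leq_in => //; first exact: leq_trans.
    by move=> i j _ ja l /andP [_ lj]; rewrite !inE in ja *; lia.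
  by move=> i _ Sia; rewrite !inE in Sia; apply: term_inc.
have term_noninc : {in [pred i | a <= i <= n] &, {homo term : i j / i <= j >-> j <= i}}.
  apply: homo_leq_in => //.
  - by move=> u v w vu wv; apply: leq_trans wv vu.
  - by move=> i j id jd l /andP [il lj]; rewrite !inE in id jd *; lia.
  - by move=> i id Sid; rewrite !inE in id Sid; apply: term_dec; lia.
move=> k_le_n; case: (leqP k a) => [k_le_a | /ltnW a_le_k].
  by apply: (term_nondec k a); rewrite ?inE.
by apply: (term_noninc a k); rewrite ?inE ?leqnn ?a_le_k ?(ltnW a_lt_n).
Qed.

Lemma expn_le_binomial_mode :
  n ^ n <= n.+1 * ('C(n, a) * (a ^ a * (n - a) ^ (n - a))).
Proof.
rewrite -{1}(subnK (ltnW a_lt_n)) expnDn -[n.+1 in X in _ <= X]card_ord -sum_nat_const.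
by apply: leq_sum => i _; rewrite [_ ^ _ * _]mulnC; apply: term_le_mode; rewrite -ltnS.
Qed.

End BinomialMode.

Open Scope R_scope.

Lemma INR_muln m k : INR (m * k) = INR m * INR k.
Proof. by rewrite -mult_INR mulnE. Qed.

Lemma INR_expn m k : INR (m ^ k) = INR m ^ k.
Proof. by elim: k => [|k IH]; rewrite ?expn0 // expnS INR_muln IH. Qed.

Lemma INR_subn m k : (k <= m)%N -> INR (m - k) = INR m - INR k.
Proof. by move=> k_le_m; rewrite subnE minus_INR //; apply/leP. Qed.

Lemma INR_leq {m k} : (m <= k)%N -> INR m <= INR k.
Proof. by move=> m_le_k; apply/le_INR/leP. Qed.

Lemma exp_le_exp (x y : R) : x <= y -> exp x <= exp y.
Proof. by case=> [/exp_increasing/Rlt_le | ->]; [|apply: Rle_refl]. Qed.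

Lemma exp_pow (u : R) k : exp u ^ k = exp (INR k * u).
Proof.
elim: k => [|k IH]; first by rewrite /= Rmult_0_l exp_0.
by rewrite [exp u ^ _]/= IH S_INR -exp_plus; congr exp; ring.
Qed.

Lemma pow_1add_le_exp (u : R) k : -1 <= u -> (1 + u) ^ k <= exp (INR k * u).
Proof.
by move=> u_ge; rewrite -exp_pow; apply: pow_incr; have := exp_ineq1_le u; lra.
Qed.

Lemma exp_add_inv_sub2_le (l : R) : 0 <= l <= 1/2 -> exp l + / exp l - 2 <= 8/3 * (l * l).
Proof.
move=> l_bounds.
have exp_lb : 1 + l <= exp l := exp_ineq1_le l.
have expN_lb : 1 - l <= / exp l by rewrite -exp_Ropp; have := exp_ineq1_le (- l); lra.
have exp_ub : exp l <= / (1 - l).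
  by rewrite -(Rinv_inv (exp l)); apply: Rinv_le_contravar; lra.
have expN_ub : / exp l <= / (1 + l) by apply: Rinv_le_contravar; lra.
have sum_inv : / (1 - l) + / (1 + l) - 2 = 2 * (l * l) * / ((1 - l) * (1 + l)) by field; lra.
have inv_le : / ((1 - l) * (1 + l)) <= 4 / 3.
  by rewrite -[4 / 3]Rinv_div; apply: Rinv_le_contravar; nra.
have : 0 <= l * l by nra.
nra.
Qed.

Lemma talagrand_exponent_le (an nn s : R) :
  1 <= an < nn -> 1 <= s <= an ->
  nn * (an / nn * ((nn - an) / nn) * (exp (s / (2 * an)) + / exp (s / (2 * an)) - 2))
    <= 2 * s * (s / (2 * an)) - (s - 1) ^ 2 / (10 * an).
Proof.
move=> [an_ge1 an_lt_nn] [s_ge1 s_le_an].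
set l := s / (2 * an).
have l_bounds : 0 <= l <= 1 / 2.
  split; first by apply: Rle_mult_inv_pos; lra.
  by apply: (Rmult_le_reg_r (2 * an)); rewrite /l; field_simplify; lra.
have cosh_ge0 : 0 <= exp l + / exp l - 2.
  have := @add_inv_le 1 (exp l); rewrite Rinv_1; have := exp_ineq1_le l; lra.
have npq_le : nn * (an / nn * ((nn - an) / nn)) <= an.
  have -> : nn * (an / nn * ((nn - an) / nn)) = an * (1 - an / nn) by field; lra.
  have : 0 < an / nn by apply: Rdiv_lt_0_compat; lra.
  nra.
have npq_ge0 : 0 <= nn * (an / nn * ((nn - an) / nn)).
  apply: Rmult_le_pos; first lra.
  by apply: Rmult_le_pos; apply: Rle_mult_inv_pos; lra.
have := Rmult_le_compat _ _ _ _ npq_ge0 cosh_ge0 npq_le (@exp_add_inv_sub2_le l l_bounds).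
have -> : an * (8 / 3 * (l * l)) = 2 / 3 * s * s / an by rewrite /l; field; lra.
have -> : 2 * s * l = s * s / an by rewrite /l; field; lra.
have : (s - 1) ^ 2 / (10 * an) <= s * s / an / 3.
  apply: (Rmult_le_reg_r (30 * an)); first lra.
  field_simplify; nra.
rewrite -Rmult_assoc; lra.
Qed.

Lemma binomial_mode_mass_ge n a : (a < n)%N ->
  1 <= (INR n + 1) * INR 'C(n, a) * ((INR a / INR n) ^ a * ((INR n - INR a) / INR n) ^ (n - a)).
Proof.
move=> a_lt_n; have nn_gt0 : 0 < INR n by apply: lt_0_INR; apply/ltP; lia.
have := INR_leq (expn_le_binomial_mode n a a_lt_n).
rewrite !INR_muln !INR_expn S_INR INR_subn ?(ltnW a_lt_n) // => mode.
apply: (Rmult_le_reg_r (INR n ^ n)); first exact: pow_lt.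
rewrite Rmult_1_l; apply: (Rle_trans _ _ _ mode); right.
have div_pow x k : x ^ k = (x / INR n) ^ k * INR n ^ k.
  by rewrite -Rpow_mult_distr; congr (_ ^ _); field; lra.
have pow_n : INR n ^ n = INR n ^ a * INR n ^ (n - a) by rewrite -pow_add plusE subnKC // ltnW.
by rewrite pow_n (div_pow (INR a)) (div_pow (INR n - INR a)); ring.
Qed.

Lemma talagrand_const_pow_le n a k : (1 <= k <= a)%N -> (a < n)%N ->
  talagrand_const (INR a / INR n) ((INR n - INR a) / INR n) (exp (INR k / (2 * INR a))) ^ n
    <= exp (- ((INR k - 1) ^ 2) / (10 * INR a)) * exp (INR k / (2 * INR a)) ^ (2 * k).
Proof.
move=> /andP [k_ge1 k_le_a] a_lt_n; set z := exp (INR k / (2 * INR a)).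
have [an_ge1 kk_ge1] : 1 <= INR a /\ 1 <= INR k by split; apply: (@INR_leq 1); lia.
have an_lt_nn : INR a < INR n by apply/lt_INR/ltP.
have kk_le_an : INR k <= INR a by apply: INR_leq.
have p_gt0 : 0 < INR a / INR n by apply: Rdiv_lt_0_compat; lra.
have q_gt0 : 0 < (INR n - INR a) / INR n by apply: Rdiv_lt_0_compat; lra.
have z_ge1 : 1 <= z.
  have : 0 <= INR k / (2 * INR a) by apply: Rle_mult_inv_pos; lra.
  by have := exp_ineq1_le (INR k / (2 * INR a)); rewrite /z; lra.
have := talagrand_const_ge1 _ _ _ p_gt0 q_gt0 z_ge1; rewrite /talagrand_const => c_ge1.
apply: Rle_trans (pow_1add_le_exp _ _ _) _; first lra.
rewrite /z exp_pow -exp_plus.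
have -> : INR (2 * k) = 2 * INR k by rewrite INR_muln /=; ring.
apply: exp_le_exp.
have := talagrand_exponent_le _ _ _ (conj an_ge1 an_lt_nn) (conj kk_ge1 kk_le_an).
rewrite /Rdiv; lra.
Qed.

Lemma cross_intersecting_card_le {n a t} {F G : {set {set 'I_n}}} :
  (t < a)%N -> (a < n)%N ->
  (forall A, A \in F -> #|A| = a) -> (forall B, B \in G -> #|B| = a) ->
  (forall A B, A \in F -> B \in G -> #|A :&: B| <= t)%N ->
  INR #|F| * INR #|G|
    <= ((INR n + 1) * exp (- ((INR a - INR t - 1) ^ 2) / (20 * INR a))) ^ 2 * INR 'C(n, a) ^ 2.
Proof.
move=> t_lt_a a_lt_n F_a G_a FG_t.
have an_ge1 : 1 <= INR a by apply: (@INR_leq 1); lia.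
have an_lt_nn : INR a < INR n by apply/lt_INR/ltP.
set p := INR a / INR n; set q := (INR n - INR a) / INR n.
set z := exp (INR (a - t) / (2 * INR a)).
have p_gt0 : 0 < p by apply: Rdiv_lt_0_compat; lra.
have q_gt0 : 0 < q by apply: Rdiv_lt_0_compat; lra.
have pq1 : p + q = 1 by rewrite /p /q; field; lra.
have z_ge1 : 1 <= z.
  have : 0 <= INR (a - t) / (2 * INR a) by apply: Rle_mult_inv_pos; [exact: pos_INR | lra].
  by have := exp_ineq1_le (INR (a - t) / (2 * INR a)); rewrite /z; lra.
have mass := cross_intersecting_weight_le p_gt0 q_gt0 pq1 z_ge1 F_a G_a FG_t.
have decay := talagrand_const_pow_le n a (a - t) ltac:(lia) a_lt_n.
rewrite -/p -/q -/z in decay.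
pose e := exp (- ((INR a - INR t - 1) ^ 2) / (20 * INR a)).
have e_sq : exp (- (INR (a - t) - 1) ^ 2 / (10 * INR a)) = e ^ 2.
  have -> : - (INR (a - t) - 1) ^ 2 / (10 * INR a)
          = INR 2 * (- ((INR a - INR t - 1) ^ 2) / (20 * INR a)).
    by rewrite INR_subn ?(ltnW t_lt_a) //=; field; lra.
  exact: esym (exp_pow _ 2).
rewrite e_sq in decay.
pose X := INR #|F| * INR #|G|; pose W := p ^ a * q ^ (n - a).
have XW_le : X * W ^ 2 <= e ^ 2.
  have zk_gt0 : 0 < z ^ (2 * (a - t)) by apply: pow_lt; lra.
  by apply: (Rmult_le_reg_r _ _ _ zk_gt0); rewrite /X /W; lra.
have mode : 1 <= (INR n + 1) * INR 'C(n, a) * W := binomial_mode_mass_ge n a a_lt_n.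
have X_ge0 : 0 <= X by apply: Rmult_le_pos; apply: pos_INR.
suff : X <= ((INR n + 1) * e) ^ 2 * INR 'C(n, a) ^ 2 by [].
have M_sq : 1 <= ((INR n + 1) * INR 'C(n, a) * W) ^ 2.
  by rewrite -(pow1 2); apply: pow_incr; lra.
apply: (Rle_trans _ (X * ((INR n + 1) * INR 'C(n, a) * W) ^ 2)).
  by rewrite -{1}(Rmult_1_r X); apply: Rmult_le_compat_l.
have -> : X * ((INR n + 1) * INR 'C(n, a) * W) ^ 2
        = ((INR n + 1) * INR 'C(n, a)) ^ 2 * (X * W ^ 2) by ring.
have -> : ((INR n + 1) * e) ^ 2 * INR 'C(n, a) ^ 2 = ((INR n + 1) * INR 'C(n, a)) ^ 2 * e ^ 2.
  by ring.
by apply: Rmult_le_compat_l => //; apply: pow2_ge_0.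
Qed.

Lemma card_uniform_family_le n a (F : {set {set 'I_n}}) :
  (forall A, A \in F -> #|A| = a) -> (#|F| <= 'C(n, a))%N.
Proof.
move=> F_a; rewrite -[n in 'C(n, _)]card_ord -card_draws.
by apply/subset_leq_card/subsetP => A /F_a; rewrite inE => ->.
Qed.

Lemma le_mul_of_le_sqr_mul (x u c : R) : 0 <= u -> x <= c -> x <= u ^ 2 * c -> x <= u * c.
Proof. by move=> u_ge0 x_le_c; case: (Rle_lt_dec 1 u) => u1; nra. Qed.

Theorem theorem4 (n a t : nat) (F G : {set {set 'I_n}}) :
  (t < a)%N -> (a < n)%N ->
  (forall A : {set 'I_n}, A \in F -> #|A| = a) ->
  (forall B : {set 'I_n}, B \in G -> #|B| = a) ->
  (forall A B : {set 'I_n}, A \in F -> B \in G -> (#|A :&: B| <= t)%N) ->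
  (INR #|F| * INR #|G| <=
     32 * INR a * INR (n - a)
     * exp (- ((INR a - INR t - 1) ^ 2) / (20 * INR a))
     * (INR 'C(n, a)) ^ 2)%R.
Proof.
move=> t_lt_a a_lt_n F_a G_a FG_t.
pose e := exp (- ((INR a - INR t - 1) ^ 2) / (20 * INR a)).
have e_gt0 : 0 < e := exp_pos _.
have C_ge0 : 0 <= INR 'C(n, a) ^ 2 := pow2_ge_0 _.
have trivial_le : INR #|F| * INR #|G| <= INR 'C(n, a) ^ 2.
  rewrite /= Rmult_1_r; apply: Rmult_le_compat; try apply: pos_INR;
  exact/INR_leq/card_uniform_family_le.
have sqr_le := cross_intersecting_card_le t_lt_a a_lt_n F_a G_a FG_t.
have n_le : INR n + 1 <= 32 * INR a * INR (n - a).
  have [an_ge1 bn_ge1] : 1 <= INR a /\ 1 <= INR (n - a) by split; apply: (@INR_leq 1); lia.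
  have : INR n = INR a + INR (n - a) by rewrite -plus_INR plusE subnKC // ltnW.
  nra.
have u_ge0 : 0 <= (INR n + 1) * e.
  by apply: Rmult_le_pos; [have := pos_INR n | apply: Rlt_le]; lra.
apply: Rle_trans (le_mul_of_le_sqr_mul _ _ _ u_ge0 trivial_le sqr_le) _.
by apply: Rmult_le_compat_r => //; apply: Rmult_le_compat_r; lra.
Qed.
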